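(* Let $x,y$ be non-commuting indeterminates and $C=xyx^{-1}y^{-1}$. Let $(R_n)_{n\in\mathbb Z}$ be the solution of $$R_{n+1}CR_{n-1}=R_n^2+1\qquad(n\in\mathbb Z)$$ with $R_0=yxy^{-1}$ and $R_1=y$. Let $$K=R_1R_0^{-1}+R_1^{-1}R_0^{-1}+R_1^{-1}R_0.$$ Then for all $n\in\mathbb Z$, $$R_{n+1}C+R_{n-1}=R_nK\qquad\text{and}\qquad R_{n+1}+CR_{n-1}=KR_n.$$
   Context: Work in the free skew field (non-commutative rational functions) over $\mathbb C$ generated by $x,y$. *)

From HB Require Import structures.
From mathcomp Require Export all_boot all_order all_algebra.
From mathcomp Require Export reals.
From mathcomp.real_closed Require Export complex.
From mathcomp Require Import finmap.
From mathcomp.multinomials Require Export monalg.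

Set Implicit Arguments.
Unset Strict Implicit.
Unset Printing Implicit Defensive.

Import GRing.Theory.
Local Open Scope ring_scope.

(* The free associative algebra K<x,y> over a field K on two letters:
   the monoid algebra of the free monoid on [bool]
   (letter [false] = x, letter [true] = y). *)
Definition free_alg (K : fieldType) := {malg K[{fmonom bool}]}.

Section FreeField.
Variables (K : fieldType) (D : unitAlgType K).

Definition is_division_ring : Prop :=
  forall d : D, d != 0 -> d \is a GRing.unit.

Definition ev2 (x y : D) (p : free_alg K) : D :=
  \sum_(m <- finmap.enum_fset (msupp p)) (p@_m *: \prod_(i <- fmonom_val m) (if i then y else x)).

Definition full_mx (n : nat) (A : 'M[free_alg K]_n) : Prop :=
  ~ exists r : nat, exists (P : 'M[free_alg K]_(n, r)) (Q : 'M[free_alg K]_(r, n)),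
      (r < n)%N /\ A = P *m Q.

Definition invertible_mx (n : nat) (B : 'M[D]_n) : Prop :=
  exists B' : 'M[D]_n, B *m B' = 1%:M /\ B' *m B = 1%:M.

(* (D, x, y) is the free skew field over K generated by x, y
   (Cohn's universal field of fractions of K<x,y>):
   D is a division K-algebra, generated as a division ring by the image of
   K<x,y> under x,y-evaluation, and a square matrix over K<x,y> becomes
   invertible over D exactly when it is full. *)
Definition is_free_skew_field (x y : D) : Prop :=
  [/\ is_division_ring,
      (forall S : D -> Prop,
          (forall p, S (ev2 x y p)) ->
          (forall a b, S a -> S b -> S (a - b)) ->
          (forall a b, S a -> S b -> S (a * b)) ->
          (forall a, S a -> S a^-1) ->
          forall d, S d)
    & forall (n : nat) (A : 'M[free_alg K]_n),
        invertible_mx (map_mx (ev2 x y) A) <-> full_mx A].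

End FreeField.

Definition commC (D : unitRingType) (x y : D) : D := x * y * x^-1 * y^-1.

Import GRing.Theory.
Local Open Scope ring_scope.
Set Implicit Arguments.
Unset Strict Implicit.

(* Write rho_n and lambda_n for the defects R_{n+1} C + R_{n-1} - R_n K and
   R_{n+1} + C R_{n-1} - K R_n of the two relations, and
   tau_n = K R_{n-1} - C R_{n-1} K + C R_n C - R_n.  The ring identities
     tau_n = C rho_{n-1} - lambda_{n-1},
     lambda_{n+1} C = rho_{n+1} + lambda_n K - K rho_n + tau_n,
   and, modulo the recurrence, rho_{n+1} R_n = R_{n+1} lambda_n and
   R_n lambda_{n-1} = rho_n R_{n-1}, show that if the defects vanish at two
   consecutive indices, they vanish at the next and at the previous one,
   provided the R_n involved are invertible.  In the free skew field no R_n
   vanishes: R_{n+1} = 0 or R_{n-1} = 0 forces R_n^2 = -1, so R_n = +-i is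
   central, and the relations at n then give (C - 1) K = 0 or K (C - 1) = 0,
   impossible since C <> 1 and K y x = x^2 + y^2 + 1 <> 0.  The relations at
   n = 0, 1 are a direct computation from R_0 = y x y^-1 and R_1 = y. *)

Ltac cancel_summands :=
  apply/eqP; rewrite -subr_eq0 ?subr0; apply/eqP;
  rewrite -[LHS]addr0 ?opprD ?opprK -?addrA;
  repeat match goal with
  | |- - ?t + _ = 0 => rewrite ?(addrCA _ t) addNKr
  | |- ?t + _ = 0 => rewrite ?(addrCA _ (- t)) addKr
  end.

Ltac cancel_units x_unit y_unit :=
  do 8 rewrite ?mulrDr ?mulrDl ?mulrA ?mul1r ?mulr1
    ?(mulrK x_unit) ?(mulrVK x_unit) ?(divrr x_unit) ?(mulVr x_unit)
    ?(mulrK y_unit) ?(mulrVK y_unit) ?(divrr y_unit) ?(mulVr y_unit).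

Lemma int_ind_succ_pred (P : int -> Prop) :
  P 0 -> (forall n, P n -> P (n + 1)) -> (forall n, P n -> P (n - 1)) ->
  forall n, P n.
Proof.
move=> P0 Psucc Ppred; elim/int_ind => [//|k|k]; rewrite -addn1 PoszD ?opprD.
  exact: Psucc.
exact: Ppred.
Qed.

Section Defects.
Variables (D : pzRingType) (C K : D).

Definition rdefect (a b c : D) := c * C + a - b * K.
Definition ldefect (a b c : D) := c + C * a - K * b.
Definition twist (a b : D) := K * a - C * a * K + C * b * C - b.

Lemma twistE z a b : twist a b = C * rdefect z a b - ldefect z a b.
Proof. by rewrite /twist /rdefect /ldefect !mulrBr !mulrDr !mulrA; cancel_summands. Qed.

Lemma ldefect_succ a b c d :
  ldefect b c d * C = rdefect b c d + ldefect a b c * K - K * rdefect a b c + twist a b.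
Proof.
rewrite /twist /rdefect /ldefect !mulrBr !mulrDr !mulrBl !mulrDl !mulrA.
by cancel_summands.
Qed.

Lemma rdefect_succ a b c d :
  c * C * a = b ^+ 2 + 1 -> d * C * b = c ^+ 2 + 1 ->
  rdefect b c d * b = c * ldefect a b c.
Proof.
move=> rec_c rec_d; rewrite /rdefect /ldefect mulrBl mulrDl rec_d.
by rewrite mulrBr mulrDr !mulrA rec_c !expr2; cancel_summands.
Qed.

Lemma ldefect_pred z a b c :
  c * C * a = b ^+ 2 + 1 -> b * C * z = a ^+ 2 + 1 ->
  b * ldefect z a b = rdefect a b c * a.
Proof.
move=> rec_c rec_b; rewrite /rdefect /ldefect mulrBl mulrDl rec_c.
by rewrite mulrBr mulrDr !mulrA rec_b !expr2; cancel_summands.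
Qed.
End Defects.

Section Propagation.
Variables (D : unitRingType) (C K : D) (Rs : int -> D).
Hypothesis recurrence : forall n, Rs (n + 1) * C * Rs (n - 1) = Rs n ^+ 2 + 1.
Hypothesis C_unit : C \is a GRing.unit.

Definition relations_hold n :=
  rdefect C K (Rs (n - 1)) (Rs n) (Rs (n + 1)) = 0 /\
  ldefect C K (Rs (n - 1)) (Rs n) (Rs (n + 1)) = 0.

Lemma relations_succ n : Rs n \is a GRing.unit ->
  relations_hold (n - 1) -> relations_hold n -> relations_hold (n + 1).
Proof.
rewrite /relations_hold !subrK !addrK => Rn_unit [r0 l0] [r1 l1].
have rec1 := recurrence (n + 1); rewrite addrK in rec1.
have r2 : rdefect C K (Rs n) (Rs (n + 1)) (Rs (n + 1 + 1)) = 0.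
  apply: (mulIr Rn_unit).
  by rewrite (rdefect_succ _ (recurrence n)) // l1 mulr0 mul0r.
have tw : twist C K (Rs (n - 1)) (Rs n) = 0.
  by rewrite (twistE _ _ (Rs (n - 1 - 1))) r0 l0 mulr0 subr0.
split=> //; apply: (mulIr C_unit).
rewrite (ldefect_succ _ _ (Rs (n - 1))) r2 l1 r1 tw.
by rewrite !(mul0r, mulr0, oppr0, addr0).
Qed.

Lemma relations_pred n : Rs n \is a GRing.unit ->
  relations_hold n -> relations_hold (n + 1) -> relations_hold (n - 1).
Proof.
rewrite /relations_hold !subrK !addrK => Rn_unit [r1 l1] [r2 l2].
have rec0 := recurrence (n - 1); rewrite subrK in rec0.
have l0 : ldefect C K (Rs (n - 1 - 1)) (Rs (n - 1)) (Rs n) = 0.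
  apply: (mulrI Rn_unit).
  by rewrite (ldefect_pred _ (recurrence n)) // r1 mulr0 mul0r.
have tw : twist C K (Rs (n - 1)) (Rs n) = 0.
  have := ldefect_succ C K (Rs (n - 1)) (Rs n) (Rs (n + 1)) (Rs (n + 1 + 1)).
  by rewrite r2 l2 r1 l1 mulr0 !mul0r !(add0r, subr0).
split=> //; apply: (mulrI C_unit).
by rewrite mulr0 -tw -[LHS]subr0 -l0 -twistE.
Qed.

Hypothesis unit_of_neq0 : forall d : D, d != 0 -> d \is a GRing.unit.
Hypothesis sqrtN1_comm : forall r : D, r ^+ 2 + 1 = 0 -> forall d, r * d = d * r.
Hypothesis C_neq1 : C != 1.
Hypothesis K_neq0 : K != 0.

Lemma divring_mulf_eq0 (a b : D) : (a * b == 0) = (a == 0) || (b == 0).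
Proof.
have [->|/unit_of_neq0 a_unit] := eqVneq a 0; first by rewrite mul0r eqxx.
exact: mulrI_eq0 (mulrI a_unit).
Qed.

Lemma sqrtN1_neq0 (r : D) : r ^+ 2 + 1 = 0 -> r != 0.
Proof.
move=> r2; apply/eqP => r0; move: r2.
by rewrite r0 expr2 mul0r add0r; apply/eqP/oner_neq0.
Qed.

Lemma relations_succ_neq0 n : relations_hold n -> Rs (n + 1) != 0.
Proof.
move=> [rn ln]; apply/eqP => Rs_succ0.
have r2 : Rs n ^+ 2 + 1 = 0 by rewrite -recurrence Rs_succ0 !mul0r.
move: rn ln; rewrite /rdefect /ldefect Rs_succ0 mul0r !add0r => /subr0_eq ->.
rewrite mulrA -(sqrtN1_comm r2 C) -mulrA -(sqrtN1_comm r2 K) -mulrBr.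
rewrite -{2}[K]mul1r -mulrBl => /eqP.
by rewrite !divring_mulf_eq0 subr_eq0 (negPf (sqrtN1_neq0 r2)) (negPf C_neq1)
  (negPf K_neq0).
Qed.

Lemma relations_pred_neq0 n : relations_hold n -> Rs (n - 1) != 0.
Proof.
move=> [rn ln]; apply/eqP => Rs_pred0.
have r2 : Rs n ^+ 2 + 1 = 0 by rewrite -recurrence Rs_pred0 !mulr0.
move: rn ln; rewrite /rdefect /ldefect Rs_pred0 mulr0 !addr0 => + /subr0_eq Rs_succE.
rewrite Rs_succE -mulrA (sqrtN1_comm r2 C) mulrA (sqrtN1_comm r2 K) -mulrBl.
rewrite -{2}[K]mulr1 -mulrBr => /eqP.
by rewrite !divring_mulf_eq0 subr_eq0 (negPf (sqrtN1_neq0 r2)) (negPf C_neq1)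
  (negPf K_neq0).
Qed.

Lemma relations_hold_all :
  relations_hold 0 -> relations_hold 1 -> forall n, relations_hold n.
Proof.
move=> rel0 rel1 n; suff [] : relations_hold n /\ relations_hold (n + 1) by [].
elim/int_ind_succ_pred: n => [|n [reln reln1]|n [reln reln1]]; first by rewrite add0r.
  split=> //; apply: relations_succ; rewrite ?addrK //.
  exact/unit_of_neq0/relations_succ_neq0.
rewrite subrK; split=> //; apply: relations_pred => //.
by apply/unit_of_neq0; rewrite -[n](addrK 1); apply: relations_pred_neq0.
Qed.
End Propagation.

Section Seeds.
Variables (D : unitRingType) (x y : D) (Rs : int -> D).
Hypotheses (x_unit : x \is a GRing.unit) (y_unit : y \is a GRing.unit).
Hypothesis recurrence :
  forall n, Rs (n + 1) * commC x y * Rs (n - 1) = Rs n ^+ 2 + 1.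
Hypotheses (Rs0 : Rs 0 = y * x * y^-1) (Rs1 : Rs 1 = y).

Let C := commC x y.
Let K := Rs 1 * (Rs 0)^-1 + (Rs 1)^-1 * (Rs 0)^-1 + (Rs 1)^-1 * Rs 0.

Lemma commC_unit : C \is a GRing.unit.
Proof. by rewrite /C /commC !unitrMl ?unitrV. Qed.

Lemma commC_mulr : C * (y * x) = x * y.
Proof. by rewrite /C /commC; cancel_units x_unit y_unit. Qed.

Lemma commC_mul_conj : C * (y * x * y^-1) = x.
Proof. by rewrite /C /commC; cancel_units x_unit y_unit. Qed.

Lemma seedK : K = ((y ^+ 2 + 1) / x + x) / y.
Proof.
rewrite /K Rs0 Rs1 !invrM ?unitrV ?unitrMl // !invrK.
by rewrite expr2; cancel_units x_unit y_unit.
Qed.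

Lemma seedK_mulr : K * y * x = x ^+ 2 + y ^+ 2 + 1.
Proof.
rewrite seedK !expr2; cancel_units x_unit y_unit.
by rewrite addrC addrA.
Qed.

Lemma seed_succ : Rs 2 = (y ^+ 2 + 1) / x.
Proof.
have := recurrence 1; rewrite subrr Rs0 Rs1 -mulrA commC_mul_conj => <-.
by rewrite mulrK.
Qed.

Lemma seed_pred : C * Rs (-1) = (x ^+ 2 + 1) / y.
Proof.
have := recurrence 0; rewrite !add0r Rs0 Rs1 -mulrA.
have -> : (y * x * y^-1) ^+ 2 + 1 = y * ((x ^+ 2 + 1) / y).
  by rewrite !expr2; cancel_units x_unit y_unit.
exact: mulrI.
Qed.

Lemma seed_relations0 : relations_hold C K Rs 0.
Proof.
rewrite /relations_hold !add0r seedK Rs0 Rs1 /rdefect /ldefect; split.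
  apply: (mulrI commC_unit); rewrite mulr0 !mulrBr mulrDr seed_pred /C /commC.
  by rewrite !expr2; cancel_units x_unit y_unit; cancel_summands.
rewrite -/C seed_pred.
by rewrite !expr2; cancel_units x_unit y_unit; cancel_summands.
Qed.

Lemma seed_relations1 : relations_hold C K Rs 1.
Proof.
rewrite /relations_hold subrr seedK Rs0 Rs1 seed_succ /rdefect /ldefect /C /commC.
by split; rewrite !expr2; cancel_units x_unit y_unit; cancel_summands.
Qed.
End Seeds.

Section SqrtN1.
Variables (F : fieldType) (A : unitAlgType F) (j : F).
Hypothesis A_division : is_division_ring A.
Hypothesis j2 : j ^+ 2 = -1.

Lemma sqrtN1_scalar (r : A) : r ^+ 2 + 1 = 0 -> r = j%:A \/ r = (- j)%:A.
Proof.
move=> r2; have factor : (r - j%:A) * (r + j%:A) = 0.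
  have jj : j%:A * j%:A = -1 :> A by rewrite mulr_algl scalerA -expr2 j2 scaleN1r.
  by rewrite mulrBl !mulrDr -(comm_alg j r) jj -r2 expr2; cancel_summands.
have [/eqP|/A_division diff_unit] := eqVneq (r - j%:A) 0.
  by rewrite subr_eq0 => /eqP; left.
right; apply/eqP; rewrite scaleNr -addr_eq0; apply/eqP.
by apply: (mulrI diff_unit); rewrite factor mulr0.
Qed.

Lemma sqrtN1_comm (r : A) : r ^+ 2 + 1 = 0 -> forall d, r * d = d * r.
Proof. by case/sqrtN1_scalar=> -> d; rewrite mulr_algl mulr_algr. Qed.
End SqrtN1.

Section FreeSkewField.
Variables (R : realType) (D : unitAlgType R[i]) (x y : D).
Hypothesis HF : is_free_skew_field x y.

Definition word (s : seq bool) : free_alg R[i] := << FMonom s >>.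

Lemma ev2_mmap p :
  ev2 x y p = mmap (in_alg D) (fun m => \prod_(b <- fmonom_val m) (if b then y else x)) p.
Proof. by apply: eq_bigr => m _; rewrite mulr_algl. Qed.

Lemma ev2D p q : ev2 x y (p + q) = ev2 x y p + ev2 x y q.
Proof. by rewrite !ev2_mmap mmapD. Qed.

Lemma ev2B p q : ev2 x y (p - q) = ev2 x y p - ev2 x y q.
Proof. by rewrite !ev2_mmap mmapB. Qed.

Lemma ev2_word s : ev2 x y (word s) = \prod_(b <- s) (if b then y else x).
Proof. by rewrite ev2_mmap mmapU /= scale1r mul1r. Qed.

(* A nonzero polynomial is a full 1 x 1 matrix, hence invertible in D. *)
Lemma ev2_neq0 p : p != 0 -> ev2 x y p != 0.
Proof.
move=> p_neq0; case: HF => _ _ /(_ 1%N (const_mx p)) [_ full_invertible].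
have [|B [pB _]] := full_invertible.
  move=> [r [P [Q [r_lt1 pPQ]]]]; move: P Q pPQ; rewrite ltnS leqn0 in r_lt1.
  rewrite (eqP r_lt1) => P Q /(congr1 (fun M : 'M_1 => M 0 0)).
  by rewrite (flatmx0 Q) mulmx0 !mxE; apply/eqP.
apply/eqP => p_ev0; move/(congr1 (fun M : 'M_1 => M 0 0)): pB.
by rewrite !mxE big_ord1 !mxE p_ev0 mul0r; apply/eqP; rewrite eq_sym oner_eq0.
Qed.

Lemma x_neq0 : x != 0.
Proof.
have := @ev2_neq0 (word [:: false]); rewrite ev2_word big_seq1.
by apply; rewrite monalgU_eq0 oner_neq0.
Qed.

Lemma y_neq0 : y != 0.
Proof.
have := @ev2_neq0 (word [:: true]); rewrite ev2_word big_seq1.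
by apply; rewrite monalgU_eq0 oner_neq0.
Qed.

Lemma commutator_neq0 : x * y - y * x != 0.
Proof.
have := @ev2_neq0 (word [:: false; true] - word [:: true; false]).
rewrite ev2B !ev2_word !big_cons !big_nil !mulr1; apply.
apply/eqP => /(congr1 (mcoeff (FMonom [:: false; true]))) /eqP.
by rewrite mcoeff0 mcoeffB !mcoeffU1 subr0 oner_eq0.
Qed.

Lemma sum_sq1_neq0 : x ^+ 2 + y ^+ 2 + 1 != 0.
Proof.
have := @ev2_neq0 (word [:: false; false] + word [:: true; true] + word [::]).
rewrite !ev2D !ev2_word !big_cons !big_nil !mulr1 -!expr2; apply.
apply/eqP => /(congr1 (mcoeff (FMonom [:: false; false]))) /eqP.
by rewrite mcoeff0 !mcoeffD !mcoeffU1 !addr0 oner_eq0.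
Qed.
End FreeSkewField.

Theorem lemma3p2 (R : realType) (D : unitAlgType R[i]) (x y : D)
  (HF : is_free_skew_field x y) (Rs : int -> D)
  (Hrec : forall n : int,
      Rs (n + 1) * commC x y * Rs (n - 1) = Rs n ^+ 2 + 1)
  (H0 : Rs 0 = y * x * y^-1) (H1 : Rs 1 = y) :
  let C := commC x y in
  let K := Rs 1 * (Rs 0)^-1 + (Rs 1)^-1 * (Rs 0)^-1 + (Rs 1)^-1 * Rs 0 in
  forall n : int,
    Rs (n + 1) * C + Rs (n - 1) = Rs n * K /\
    Rs (n + 1) + C * Rs (n - 1) = K * Rs n.
Proof.
move=> C K n; have [divD _ _] := HF.
have x_unit := divD _ (x_neq0 HF); have y_unit := divD _ (y_neq0 HF).
have C_neq1 : C != 1.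
  apply: contra_neq (commutator_neq0 HF) => C1.
  by rewrite -(commC_mulr x_unit y_unit) -/C C1 mul1r subrr.
have K_neq0 : K != 0.
  apply: contra_neq (sum_sq1_neq0 HF) => K0.
  by rewrite -(seedK_mulr x_unit y_unit H0 H1) -/K K0 !mul0r.
have [/subr0_eq rel_r /subr0_eq rel_l] := relations_hold_all Hrec
  (commC_unit x_unit y_unit) divD (sqrtN1_comm divD (sqr_i R)) C_neq1 K_neq0
  (seed_relations0 x_unit y_unit Hrec H0 H1)
  (seed_relations1 x_unit y_unit Hrec H0 H1) n.
by split.
Qed.
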